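(* Under Conditions 1 and 2, there exist constants $n_0\ge1$ and $C>0$ such that for all $n>n_0$, $\sup_{t\ge0}R^{(n)}_\beta(t)\le C$.
   Context: Notation: $\mathbb Z_+=\{1,2,\dots\}$, $\mathbb R_+=[0,\infty)$. For each $n\ge1$: $\lambda^{(n)}>0$; a probability $\Lambda^{(n)}$ on $\mathbb R_+$ with tail $\bar\Lambda^{(n)}(t)=\Lambda^{(n)}((t,\infty))$, $\eta^{(n)}=\int_0^\infty y\Lambda^{(n)}(dy)$, $\sigma^{(n)}=\frac12\int_0^\infty y^2\Lambda^{(n)}(dy)$ finite; probability laws $(p_k^{(n)})_{k\ge1}$, $(q_k^{(n)})_{k\ge1}$ on $\mathbb Z_+$ with generating functions $g^{(n)},h^{(n)}$, $m^{(n)}=\sum_kkp_k^{(n)}<\infty$; $\gamma_n>0$ with $\gamma_n\to\infty$, $\gamma_n/n\to\gamma_*\in[0,\infty)$. $\phi^{(n)}(z)=n\gamma_n[g^{(n)}(1-z/n)-(1-z/n)]$, $\psi^{(n)}(z)=\gamma_n[1-h^{(n)}(1-z/n)]$ for $z\in[0,n]$. Condition 1: (i) $\lambda^{(n)}\to\lambda>0$, $\eta^{(n)}\to\eta>0$, $\sigma^{(n)}\to\sigma>0$, $\gamma_n(1-\lambda^{(n)}\eta^{(n)})\to b\in\mathbb R$; (ii) $\psi^{(n)}\to\psi$ uniformly on compacts of $[0,\infty)$; (iii) $\{\phi^{(n)}\}$ is uniformly Lipschitz on bounded intervals and converges uniformly on compacts to a continuous $\phi$. Under Condition 1, $\lambda\eta=1$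 and $m:=\lim_n\gamma_n(1-m^{(n)})$ exists (so $\gamma_n(1-\lambda^{(n)}\eta^{(n)}m^{(n)})\to b+m$). Condition 2 (for some $\alpha\in(1,2)$): (1) there are $C,k_0>0$ with $n\gamma_n\sum_{k\ge k_0}(k/n)^\alpha p^{(n)}_k+\sum_kk^\alpha q^{(n)}_k\le C$ for all $n$, and $\lim_{k_1\to\infty}\limsup_n\gamma_n\sum_{k\ge k_1}kp^{(n)}_k=0$; (2) there are $C_0>0$ and a probability $\Lambda^*$ on $\mathbb R_+$ with $\int t^{2\alpha}\Lambda^*(dt)<\infty$ and $\bar\Lambda^{(n)}\le C_0\bar\Lambda^*$ for all $n$. Fix $\beta\in[0,\infty)$ with $\beta>-(b+m)/(\sigma\lambda)$. Let $R^{(n)}$ be the unique locally integrable solution of $R^{(n)}(t)=\lambda^{(n)}m^{(n)}\bar\Lambda^{(n)}(t)+\lambda^{(n)}m^{(n)}\int_0^tR^{(n)}(t-s)\bar\Lambda^{(n)}(s)ds$, $t\ge0$, and $R^{(n)}_\beta(t)=e^{-\beta t/\gamma_n}R^{(n)}(t)$. *)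

From Stdlib Require Import Reals Lra ClassicalEpsilon.
Open Scope R_scope.

(* Value of a convergent series (chosen by classical epsilon; meaningful
   only when the series converges). *)
Definition series_value (u : nat -> R) : R :=
  epsilon (inhabits 0) (fun l => infinite_sum u l).

Definition gen_fun (p : nat -> R) (x : R) : R :=
  series_value (fun k => p k * x ^ k).

(* p is a probability law on Z_+ = {1,2,...} (p 0 = 0). *)
Definition prob_Zplus (p : nat -> R) : Prop :=
  p 0%nat = 0 /\ (forall k, 0 <= p k) /\ infinite_sum p 1.

Definition is_RInt (f : R -> R) (a b I : R) : Prop :=
  exists pr : Riemann_integrable f a b, RiemannInt pr = I.

Definition is_improper_int0 (f : R -> R) (l : R) : Prop :=
  (forall T, 0 <= T -> exists I, is_RInt f 0 T I) /\
  (forall eps, 0 < eps -> exists T0, forall T I,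
      T0 <= T -> 0 <= T -> is_RInt f 0 T I -> Rabs (I - l) < eps).

(* F is the tail function t |-> Lambda((t,oo)), t >= 0, of a probability
   measure Lambda on R_+: values in [0,1], nonincreasing, right-continuous,
   tending to 0 at infinity.  (Every such F is the tail of a unique
   probability measure on R_+.) *)
Definition is_tail (F : R -> R) : Prop :=
  (forall t, 0 <= t -> 0 <= F t <= 1) /\
  (forall s t, 0 <= s -> s <= t -> F t <= F s) /\
  (forall t, 0 <= t -> forall eps, 0 < eps -> exists d, 0 < d /\
      forall u, t <= u -> u < t + d -> Rabs (F u - F t) < eps) /\
  (forall eps, 0 < eps -> exists T, forall t, T <= t -> 0 <= t -> F t < eps).

Definition phi_n (p : nat -> R) (n : nat) (gam z : R) : R :=
  INR n * gam * (gen_fun p (1 - z / INR n) - (1 - z / INR n)).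

Definition psi_n (q : nat -> R) (n : nat) (gam z : R) : R :=
  gam * (1 - gen_fun q (1 - z / INR n)).

(* f n (defined on [0,n]) converges to g uniformly on compacts of [0,oo). *)
Definition unif_cv_compacts (f : nat -> R -> R) (g : R -> R) : Prop :=
  forall K eps, 0 < eps -> exists N, forall n z,
    (N <= n)%nat -> 0 <= z -> z <= K -> z <= INR n -> Rabs (f n z - g z) < eps.

Definition unif_lipschitz_bounded (f : nat -> R -> R) : Prop :=
  forall K, exists L, forall n x y, (1 <= n)%nat ->
    0 <= x -> x <= K -> x <= INR n -> 0 <= y -> y <= K -> y <= INR n ->
    Rabs (f n x - f n y) <= L * Rabs (x - y).

Definition continuous_on_Rplus (g : R -> R) : Prop :=
  forall x, 0 <= x -> forall eps, 0 < eps -> exists d, 0 < d /\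
    forall y, 0 <= y -> Rabs (y - x) < d -> Rabs (g y - g x) < eps.

From Stdlib Require Import Reals Lra Lia.
From Coquelicot Require RInt.
Open Scope R_scope.

(* Put a = lam m^(n), th = beta / gam_n and p = 2 alpha - 1.  The discounted function
   u(t) = exp (- th t) R^(n)(t) solves the renewal equation u = g + g * u with
   g(s) = a exp (- th s) Lbar(s).  Since exp (- th s) <= 1 - th s + th^2 S s + th S^(1-p) s^p
   with S = sqrt gam_n, the domination Lbar <= C0 Lstar bounds g by a kernel of total mass
   1 - (b + m + lam beta sigma) / gam_n + o(1 / gam_n), which is at most 1 for large n by the
   choice of beta, and which is at most A = 2 lam on [0, 1/(2A)].  A renewal equation with
   such a kernel has solution at most 4A: proceeding by windows of length 1/(2A), only the
   part of the convolution over the current window is unknown, and it carries mass <= 1/2. *)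

Lemma is_RInt_unique f a b I J : is_RInt f a b I -> is_RInt f a b J -> I = J.
Proof. intros [p1 <-] [p2 <-]. apply RiemannInt_P5. Qed.

Lemma is_RInt_le f g a b I J : a <= b -> (forall x, a < x < b -> f x <= g x) ->
  is_RInt f a b I -> is_RInt g a b J -> I <= J.
Proof. intros Hab H [p1 <-] [p2 <-]. apply RiemannInt_P19; auto. Qed.

Lemma is_RInt_const c a b : is_RInt (fun _ => c) a b (c * (b - a)).
Proof. exists (RiemannInt_P14 a b c). apply RiemannInt_P15. Qed.

Lemma is_RInt_ext f g a b I : a <= b -> (forall x, a <= x <= b -> f x = g x) ->
  is_RInt f a b I -> is_RInt g a b I.
Proof.
  intros Hab H [p <-].
  assert (H' : forall x, Rmin a b <= x <= Rmax a b -> f x = g x).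
  { intros x Hx; apply H; unfold Rmin, Rmax in Hx; destruct (Rle_dec a b); lra. }
  exists (Riemann_integrable_ext g H' p).
  apply RiemannInt_P18; auto. intros x Hx. symmetry; apply H. lra.
Qed.

Lemma is_RInt_lin f g a b I J c : is_RInt f a b I -> is_RInt g a b J ->
  is_RInt (fun x => f x + c * g x) a b (I + c * J).
Proof. intros [p1 <-] [p2 <-]. exists (RiemannInt_P10 c p1 p2). apply RiemannInt_P13. Qed.

Lemma is_RInt_scal f a b I c : a <= b -> is_RInt f a b I ->
  is_RInt (fun x => c * f x) a b (c * I).
Proof.
  intros Hab H.
  replace (c * I) with (0 * (b - a) + c * I) by ring.
  apply (is_RInt_ext (fun x => 0 + c * f x)); [exact Hab | intros; ring |].
  exact (is_RInt_lin _ _ a b _ _ c (is_RInt_const 0 a b) H).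
Qed.

Lemma is_RInt_split f a b c I : a <= c <= b -> is_RInt f a b I ->
  exists I1 I2, is_RInt f a c I1 /\ is_RInt f c b I2 /\ I1 + I2 = I.
Proof.
  intros Hc [p <-].
  exists (RiemannInt (RiemannInt_P22 p Hc)), (RiemannInt (RiemannInt_P23 p Hc)).
  split; [eexists; reflexivity|]. split; [eexists; reflexivity|].
  apply RiemannInt_P25; lra.
Qed.

Lemma is_RInt_le_const f a b I c : a <= b -> (forall x, a < x < b -> f x <= c) ->
  is_RInt f a b I -> I <= c * (b - a).
Proof. intros Hab Hc H. exact (is_RInt_le _ _ _ _ _ _ Hab Hc H (is_RInt_const c a b)). Qed.

Lemma is_RInt_ge_const f a b I c : a <= b -> (forall x, a < x < b -> c <= f x) ->
  is_RInt f a b I -> c * (b - a) <= I.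
Proof. intros Hab Hc H. exact (is_RInt_le _ _ _ _ _ _ Hab Hc (is_RInt_const c a b) H). Qed.

Lemma is_RInt_bounded f a b I : a <= b -> is_RInt f a b I ->
  exists M, forall t, a <= t <= b -> Rabs (f t) <= M.
Proof.
  intros Hab [pr _].
  destruct (@RInt.ex_RInt_ub Hierarchy.R_NormedModule f a b (RInt.ex_RInt_Reals_1 f a b pr))
    as [M HM].
  exists M. intros t Ht. apply HM. unfold Rmin, Rmax; destruct (Rle_dec a b); lra.
Qed.

Lemma is_improper_int0_ext f g L : (forall x, f x = g x) ->
  is_improper_int0 f L -> is_improper_int0 g L.
Proof.
  intros Hfg [Hex Hlim]. split.
  - intros T HT. destruct (Hex T HT) as [I HI]. exists I.
    apply (is_RInt_ext f); auto.
  - intros eps Heps. destruct (Hlim eps Heps) as [T0 HT0]. exists T0.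
    intros T I HT0T HT HI. apply (HT0 T I); auto.
    apply (is_RInt_ext g); auto.
Qed.

Lemma is_improper_int0_lin f g L1 L2 c : is_improper_int0 f L1 -> is_improper_int0 g L2 ->
  is_improper_int0 (fun x => f x + c * g x) (L1 + c * L2).
Proof.
  intros [Hf Hfl] [Hg Hgl]. split.
  - intros T HT. destruct (Hf T HT) as [I HI], (Hg T HT) as [J HJ].
    exists (I + c * J). now apply is_RInt_lin.
  - intros eps Heps.
    set (e := eps / (2 * (Rabs c + 1))).
    assert (He : 0 < e) by (unfold e; pose proof (Rabs_pos c);
                             apply Rdiv_lt_0_compat; lra).
    assert (Hce : (Rabs c + 1) * e = eps / 2)
      by (unfold e; pose proof (Rabs_pos c); field; lra).
    destruct (Hfl (eps / 2) ltac:(lra)) as [T1 HT1], (Hgl e He) as [T2 HT2].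
    exists (Rmax T1 T2). intros T I HT HT0 HI.
    pose proof (Rmax_l T1 T2). pose proof (Rmax_r T1 T2).
    destruct (Hf T HT0) as [If HIf], (Hg T HT0) as [Ig HIg].
    rewrite (is_RInt_unique _ _ _ _ _ HI (is_RInt_lin _ _ _ _ _ _ c HIf HIg)).
    specialize (HT1 T If ltac:(lra) HT0 HIf). specialize (HT2 T Ig ltac:(lra) HT0 HIg).
    replace (If + c * Ig - (L1 + c * L2)) with ((If - L1) + c * (Ig - L2)) by ring.
    eapply Rle_lt_trans; [apply Rabs_triang|]. rewrite Rabs_mult.
    assert (Rabs c * Rabs (Ig - L2) <= (Rabs c + 1) * e)
      by (apply Rmult_le_compat; try apply Rabs_pos; lra).
    lra.
Qed.

Lemma is_improper_int0_scal f L c : is_improper_int0 f L ->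
  is_improper_int0 (fun x => c * f x) (c * L).
Proof.
  intros H. replace (c * L) with (L + (c - 1) * L) by ring.
  apply (is_improper_int0_ext (fun x => f x + (c - 1) * f x)); [intros; ring|].
  now apply is_improper_int0_lin.
Qed.

Lemma is_improper_int0_partial_le f L T I : (forall x, 0 <= x -> 0 <= f x) ->
  is_improper_int0 f L -> 0 <= T -> is_RInt f 0 T I -> I <= L.
Proof.
  intros Hf [Hex Hlim] HT HI. destruct (Rle_or_lt I L) as [|Hlt]; auto.
  destruct (Hlim (I - L) ltac:(lra)) as [T0 HT0].
  pose proof (Rmax_l T T0). pose proof (Rmax_r T T0). set (T' := Rmax T T0) in *.
  destruct (Hex T' ltac:(lra)) as [I' HI'].
  destruct (is_RInt_split f 0 T' T I' ltac:(lra) HI') as (I1 & I2 & H1 & H2 & E).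
  rewrite (is_RInt_unique _ _ _ _ _ H1 HI) in E.
  assert (0 * (T' - T) <= I2)
    by (apply (is_RInt_ge_const f T T'); auto; intros; apply Hf; lra).
  specialize (HT0 T' I' ltac:(lra) ltac:(lra) HI'). apply Rabs_def2 in HT0. lra.
Qed.

Lemma le_of_le_add_halves x c E : 0 <= E -> (forall m, x <= c + E * (/ 2) ^ m) -> x <= c.
Proof.
  intros HE H. destruct (Rle_or_lt x c) as [|Hlt]; auto.
  destruct (pow_lt_1_zero (/ 2) ltac:(rewrite Rabs_pos_eq; lra) ((x - c) / (E + 1)))
    as [N HN].
  { apply Rdiv_lt_0_compat; lra. }
  specialize (HN N (Nat.le_refl N)). specialize (H N).
  rewrite Rabs_pos_eq in HN by (apply pow_le; lra).
  assert (E * (/ 2) ^ N <= (E + 1) * (/ 2) ^ N)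
    by (apply Rmult_le_compat_r; [apply pow_le|]; lra).
  apply (Rmult_lt_compat_l (E + 1)) in HN; [|lra].
  replace ((E + 1) * ((x - c) / (E + 1))) with (x - c) in HN by (field; lra).
  lra.
Qed.

Lemma le_by_halving (P : R -> Prop) (u : R -> R) c M :
  (forall x, P x -> u x <= M) ->
  (forall E, 0 <= E -> (forall x, P x -> u x <= c + E) -> forall x, P x -> u x <= c + E / 2) ->
  forall x, P x -> u x <= c.
Proof.
  intros HM Hstep x Hx.
  set (E0 := Rmax (M - c) 0).
  assert (HE0 : 0 <= E0) by apply Rmax_r.
  assert (Hm : forall m y, P y -> u y <= c + E0 * (/ 2) ^ m).
  { induction m; intros y Hy.
    - pose proof (HM y Hy). pose proof (Rmax_l (M - c) 0). unfold E0. simpl. lra.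
    - simpl. replace (E0 * (/ 2 * (/ 2) ^ m)) with (E0 * (/ 2) ^ m / 2) by (unfold Rdiv; ring).
      apply Hstep; auto. apply Rmult_le_pos; auto. apply pow_le; lra. }
  apply (le_of_le_add_halves _ _ E0 HE0). intro m; apply Hm; auto.
Qed.

Section Renewal.

Variables (A d : R) (g k u : R -> R) (h : R -> R -> R).

Hypothesis A_pos : 0 < A.
Hypothesis A_d : 2 * A * d = 1.
Hypothesis g_nonneg : forall s, 0 <= s -> 0 <= g s.
Hypothesis g_le_k : forall s, 0 <= s -> g s <= k s.
Hypothesis g_le_A : forall s, 0 <= s -> g s <= A.
Hypothesis g_nonincreasing : forall s t, 0 <= s -> s <= t -> g t <= g s.
Hypothesis k_le_A : forall s, 0 <= s -> s <= d -> k s <= A.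
Hypothesis k_mass : forall T, 0 <= T -> exists I, is_RInt k 0 T I /\ I <= 1.
Hypothesis u_locally_bounded : forall T, 0 <= T -> exists M, forall t, 0 <= t <= T -> u t <= M.
Hypothesis renewal_eq : forall t, 0 <= t -> exists I, is_RInt (h t) 0 t I /\ u t = g t + I.
Hypothesis h_conv : forall t s, 0 <= s <= t -> h t s = g s * u (t - s).

Lemma d_pos : 0 < d.
Proof. nra. Qed.

Lemma convolution_piece_le x s1 s2 c I K :
  0 <= s1 -> s1 <= s2 -> s2 <= x -> 0 <= c -> (forall s, s1 < s < s2 -> u (x - s) <= c) ->
  is_RInt (h x) s1 s2 I -> is_RInt k s1 s2 K -> I <= c * K.
Proof.
  intros Hs1 Hs12 Hs2 Hc Hu HI HK.
  apply (is_RInt_le (h x) (fun s => c * k s) s1 s2); auto using is_RInt_scal.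
  intros s Hs. rewrite h_conv by lra.
  pose proof (g_nonneg s ltac:(lra)). pose proof (g_le_k s ltac:(lra)).
  pose proof (Hu s Hs). nra.
Qed.

Lemma renewal_first_window E : 0 <= E ->
  (forall x, 0 <= x <= d -> u x <= 2 * A + E) ->
  forall x, 0 <= x <= d -> u x <= 2 * A + E / 2.
Proof.
  intros HE Hw x Hx.
  destruct (renewal_eq x ltac:(lra)) as (I & HI & ->).
  destruct (k_mass x ltac:(lra)) as (K & HK & _).
  assert (HIK : I <= (2 * A + E) * K).
  { apply (convolution_piece_le x 0 x); auto; try lra.
    intros s Hs. apply Hw; lra. }
  assert (HKx : K <= A * (x - 0))
    by (apply (is_RInt_le_const k 0 x); auto; try lra; intros; apply k_le_A; lra).
  pose proof (g_le_A x ltac:(lra)).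
  assert ((2 * A + E) * K <= (2 * A + E) * (A * d)) by (apply Rmult_le_compat_l; nra).
  nra.
Qed.

(* On [c, c + d] the convolution splits into [x - s] in [c, x] (unknown, mass <= 1/2),
   in [d, c] (bounded by [4 A]) and in [0, d] (bounded by [2 A]); the margin [2 A] on the
   last piece absorbs [g x], because [g] is nonincreasing and [k >= g]. *)
Lemma renewal_next_window c E : d <= c -> 0 <= E ->
  (forall x, 0 <= x <= d -> u x <= 2 * A) ->
  (forall x, 0 <= x <= c -> u x <= 4 * A) ->
  (forall x, c <= x <= c + d -> u x <= 4 * A + E) ->
  forall x, c <= x <= c + d -> u x <= 4 * A + E / 2.
Proof.
  intros Hc HE H2A H4A Hw x Hx.
  pose proof d_pos.
  destruct (renewal_eq x ltac:(lra)) as (I & HI & ->).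
  destruct (k_mass x ltac:(lra)) as (K & HK & HK1).
  set (s1 := x - c). set (s2 := x - d).
  destruct (is_RInt_split _ 0 x s1 I ltac:(unfold s1; lra) HI) as (I1 & I23 & HI1 & HI23 & EI).
  destruct (is_RInt_split _ s1 x s2 I23 ltac:(unfold s1, s2; lra) HI23)
    as (I2 & I3 & HI2 & HI3 & EI').
  destruct (is_RInt_split _ 0 x s1 K ltac:(unfold s1; lra) HK) as (K1 & K23 & HK1' & HK23 & EK).
  destruct (is_RInt_split _ s1 x s2 K23 ltac:(unfold s1, s2; lra) HK23)
    as (K2 & K3 & HK2 & HK3 & EK').
  assert (B1 : I1 <= (4 * A + E) * K1).
  { apply (convolution_piece_le x 0 s1); auto; unfold s1 in *; try lra.
    intros s Hs. apply Hw; lra. }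
  assert (B2 : I2 <= (4 * A) * K2).
  { apply (convolution_piece_le x s1 s2); auto; unfold s1, s2 in *; try lra.
    intros s Hs. apply H4A; lra. }
  assert (B3 : I3 <= (2 * A) * K3).
  { apply (convolution_piece_le x s2 x); auto; unfold s2 in *; try lra.
    intros s Hs. apply H2A; lra. }
  assert (C1 : K1 <= A * (s1 - 0)).
  { apply (is_RInt_le_const k 0 s1); auto; unfold s1 in *; try lra.
    intros s Hs. apply k_le_A; lra. }
  assert (C3 : g x * (x - s2) <= K3).
  { apply (is_RInt_ge_const k s2 x); auto; unfold s2 in *; try lra.
    intros s Hs. pose proof (g_le_k s ltac:(lra)).
    pose proof (g_nonincreasing s x ltac:(lra) ltac:(lra)). lra. }
  assert (HK1half : K1 <= / 2).
  { assert (A * (s1 - 0) <= A * d) by (apply Rmult_le_compat_l; unfold s1; lra). lra. }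
  assert (EK1 : E * K1 <= E / 2) by (apply (Rmult_le_compat_l E) in HK1half; lra).
  assert (Hgx : g x <= 2 * A * K3).
  { replace (x - s2) with d in C3 by (unfold s2; ring).
    replace (g x) with (2 * A * (g x * d))
      by (replace (2 * A * (g x * d)) with (g x * (2 * A * d)) by ring; rewrite A_d; ring).
    apply Rmult_le_compat_l; lra. }
  nra.
Qed.

Lemma renewal_le_first_window x : 0 <= x <= d -> u x <= 2 * A.
Proof.
  pose proof d_pos. destruct (u_locally_bounded d ltac:(lra)) as (M & HM).
  apply (le_by_halving (fun y => 0 <= y <= d) u (2 * A) M); auto.
  exact renewal_first_window.
Qed.

Lemma renewal_le_windows (j : nat) x : 0 <= x <= (INR j + 1) * d -> u x <= 4 * A.
Proof.
  pose proof d_pos. revert x. induction j as [|j IH]; intros x Hx.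
  - simpl in Hx. pose proof (renewal_le_first_window x ltac:(lra)). lra.
  - rewrite S_INR in Hx. pose proof (pos_INR j).
    set (c := (INR j + 1) * d) in *.
    destruct (Rle_dec x c) as [Hxc|Hxc]; [apply IH; lra|].
    destruct (u_locally_bounded (c + d) ltac:(unfold c; nra)) as (M & HM).
    apply (le_by_halving (fun y => c <= y <= c + d) u (4 * A) M).
    + intros y Hy. apply HM. unfold c in *; nra.
    + intros E HE. apply renewal_next_window; auto.
      * unfold c; nra.
      * exact renewal_le_first_window.
    + unfold c in *; nra.
Qed.

Theorem renewal_solution_le t : 0 <= t -> u t <= 4 * A.
Proof.
  intros Ht. pose proof d_pos.
  destruct (archimed (t / d)) as [Hup _].
  assert (0 <= t / d) by (apply Rmult_le_pos; [lra | left; apply Rinv_0_lt_compat; lra]).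
  destruct (IZN (up (t / d))) as [j Hj]; [apply le_IZR; lra|].
  rewrite Hj, <- INR_IZR_INZ in Hup.
  apply (renewal_le_windows j).
  assert (t = t / d * d) by (field; lra). nra.
Qed.

End Renewal.

Lemma exp_le_compat x y : x <= y -> exp x <= exp y.
Proof. intros [H|<-]; [left; apply exp_increasing; auto | lra]. Qed.

Lemma exp_neg_le_quadratic x : 0 <= x -> exp (- x) <= 1 - x + x ^ 2.
Proof.
  intros Hx.
  assert (Hex : exp x = exp (x / 2) * exp (x / 2)) by (rewrite <- exp_plus; f_equal; field).
  assert (H2 : 1 + x + x ^ 2 / 4 <= exp x).
  { rewrite Hex. pose proof (exp_ineq1_le (x / 2)).
    apply Rle_trans with ((1 + x / 2) * (1 + x / 2)); [nra|].
    apply Rmult_le_compat; lra. }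
  pose proof (exp_pos x).
  rewrite exp_Ropp. apply Rmult_le_reg_r with (exp x); auto.
  rewrite Rinv_l by lra.
  apply Rle_trans with ((1 - x + x ^ 2) * (1 + x + x ^ 2 / 4)); [nra|].
  apply Rmult_le_compat_l; [nra|lra].
Qed.

(* The quadratic bound for [s <= S], the trivial bound [exp (- th s) <= 1] beyond. *)
Lemma exp_neg_le_kernel th S p s : 0 <= th -> 0 < S -> 1 < p -> 0 < s ->
  exp (- (th * s)) <= 1 - th * s + th ^ 2 * S * s + th * Rpower S (1 - p) * Rpower s p.
Proof.
  intros Hth HS Hp Hs.
  assert (HK : 0 < Rpower S (1 - p) * Rpower s p) by (apply Rmult_lt_0_compat; apply exp_pos).
  destruct (Rle_or_lt s S) as [Hle|Hgt].
  - pose proof (exp_neg_le_quadratic (th * s) ltac:(nra)) as Hq.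
    replace ((th * s) ^ 2) with (th ^ 2 * s ^ 2) in Hq by ring.
    assert (0 <= th * (Rpower S (1 - p) * Rpower s p)) by nra.
    assert (th ^ 2 * s ^ 2 <= th ^ 2 * S * s).
    { replace (th ^ 2 * S * s) with (th ^ 2 * (S * s)) by ring.
      apply Rmult_le_compat_l; nra. }
    nra.
  - assert (Hks : s <= Rpower S (1 - p) * Rpower s p).
    { unfold Rpower. rewrite <- exp_plus, <- (exp_ln s) at 1 by lra.
      apply exp_le_compat. pose proof (ln_increasing S s HS Hgt). nra. }
    assert (exp (- (th * s)) <= 1) by (rewrite <- exp_0; apply exp_le_compat; nra).
    assert (th * s <= th * (Rpower S (1 - p) * Rpower s p)) by (apply Rmult_le_compat_l; lra).
    assert (0 <= th ^ 2 * S * s) by (apply Rmult_le_pos; [apply Rmult_le_pos|]; nra).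
    nra.
Qed.

(* With [c1 = th - th^2 S] and [c2 = th S^(1-p) C0], the kernel
   [a (F s - c1 s F s + c2 s^p Ls s)] dominating [a exp (- th s) F s] is at most [A]
   on [[0, 1/(2A)]] and has total mass at most [1]. *)
Definition discount_admissible (a th S C0 eta sig l p A : R) : Prop :=
  0 < a /\ 0 <= th /\ 0 < S /\ th * S <= 1 /\
  a * (1 + th * Rpower S (1 - p) * C0 * Rpower (/ (2 * A)) p) <= A /\
  a * (eta - (th - th ^ 2 * S) * sig + th * Rpower S (1 - p) * C0 * l) <= 1.

Section DiscountedRenewal.

Variables (F Ls Rf : R -> R) (a th S C0 eta sig l p A : R).

Hypothesis admissible : discount_admissible a th S C0 eta sig l p A.
Hypothesis p_gt_1 : 1 < p.
Hypothesis C0_pos : 0 < C0.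
Hypothesis F_tail : is_tail F.
Hypothesis Ls_tail : is_tail Ls.
Hypothesis F_dominated : forall t, 0 <= t -> F t <= C0 * Ls t.
Hypothesis F_int : is_improper_int0 F eta.
Hypothesis sF_int : is_improper_int0 (fun s => s * F s) sig.
Hypothesis J_int :
  is_improper_int0 (fun t => (if Rlt_dec 0 t then Rpower t p else 0) * Ls t) l.
Hypothesis Rf_int : forall T, 0 <= T -> exists I, is_RInt Rf 0 T I.
Hypothesis Rf_eq : forall t, 0 <= t -> exists I,
  is_RInt (fun s => Rf (t - s) * F s) 0 t I /\ Rf t = a * F t + a * I.

Let d := / (2 * A).
Let c1 := th - th ^ 2 * S.
Let c2 := th * Rpower S (1 - p) * C0.
Let J t := (if Rlt_dec 0 t then Rpower t p else 0) * Ls t.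
Let g s := a * exp (- (th * s)) * F s.
Let k s := a * (F s - c1 * (s * F s) + c2 * J s).

Lemma c2_nonneg : 0 <= c2.
Proof.
  destruct admissible as (_ & Hth & _).
  unfold c2. pose proof (exp_pos ((1 - p) * ln S)). unfold Rpower.
  apply Rmult_le_pos; [apply Rmult_le_pos|]; lra.
Qed.

Lemma discount_A_pos : 0 < A.
Proof.
  destruct admissible as (Ha & _ & _ & _ & HA & _).
  fold c2 d in HA.
  assert (0 <= c2 * Rpower d p) by (apply Rmult_le_pos; [apply c2_nonneg | left; apply exp_pos]).
  nra.
Qed.

Lemma F_bounds t : 0 <= t -> 0 <= F t <= 1.
Proof. destruct F_tail as (H & _). apply H. Qed.

Lemma J_nonneg t : 0 <= t -> 0 <= J t.
Proof.
  intros Ht. destruct Ls_tail as (HL & _). pose proof (HL t Ht).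
  unfold J. destruct (Rlt_dec 0 t); [|lra].
  apply Rmult_le_pos; [left; apply exp_pos | lra].
Qed.

Lemma J_le_near_0 t : 0 <= t <= d -> J t <= Rpower d p.
Proof.
  intros Ht. destruct Ls_tail as (HL & _). pose proof (HL t ltac:(lra)).
  pose proof (exp_pos (p * ln d)).
  unfold J. destruct (Rlt_dec 0 t).
  - apply Rle_trans with (Rpower t p * 1); [apply Rmult_le_compat_l; [left; apply exp_pos|lra]|].
    rewrite Rmult_1_r. apply Rle_Rpower_l; lra.
  - unfold Rpower. lra.
Qed.

Lemma discount_g_nonneg s : 0 <= s -> 0 <= g s.
Proof.
  intros Hs. destruct admissible as (Ha & _). pose proof (F_bounds s Hs).
  pose proof (exp_pos (- (th * s))).
  unfold g. apply Rmult_le_pos; [apply Rmult_le_pos|]; lra.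
Qed.

Lemma discount_g_le_k s : 0 <= s -> g s <= k s.
Proof.
  intros Hs. destruct admissible as (Ha & Hth & HS & _).
  pose proof (F_bounds s Hs). pose proof c2_nonneg.
  unfold g, k. rewrite Rmult_assoc. apply Rmult_le_compat_l; [lra|].
  destruct (Rle_or_lt s 0) as [Hs0|Hs0].
  - replace s with 0 by lra. unfold J. destruct (Rlt_dec 0 0); [lra|].
    rewrite Rmult_0_r, Ropp_0, exp_0. lra.
  - pose proof (exp_neg_le_kernel th S p s Hth HS p_gt_1 Hs0) as Hexp.
    apply (Rmult_le_compat_r (F s)) in Hexp; [|lra].
    assert (HJ : Rpower s p * F s <= C0 * J s).
    { unfold J. destruct (Rlt_dec 0 s); [|lra].
      pose proof (F_dominated s Hs). pose proof (exp_pos (p * ln s)). unfold Rpower in *.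
      nra. }
    assert (0 <= th * Rpower S (1 - p)) by (apply Rmult_le_pos; [lra | left; apply exp_pos]).
    apply (Rmult_le_compat_l (th * Rpower S (1 - p))) in HJ; [|lra].
    unfold c1, c2. nra.
Qed.

Lemma discount_g_le_A s : 0 <= s -> g s <= A.
Proof.
  intros Hs. destruct admissible as (Ha & Hth & _ & _ & HA & _). fold c2 d in HA.
  assert (0 <= c2 * Rpower d p) by (apply Rmult_le_pos; [apply c2_nonneg | left; apply exp_pos]).
  pose proof (F_bounds s Hs). pose proof (exp_pos (- (th * s))).
  assert (exp (- (th * s)) <= 1) by (rewrite <- exp_0; apply exp_le_compat; nra).
  assert (exp (- (th * s)) * F s <= 1) by nra.
  unfold g. rewrite Rmult_assoc. nra.
Qed.

Lemma discount_g_nonincreasing s t : 0 <= s -> s <= t -> g t <= g s.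
Proof.
  intros Hs Hst. destruct admissible as (Ha & Hth & _). destruct F_tail as (_ & Hmon & _).
  pose proof (F_bounds t ltac:(lra)). pose proof (Hmon s t Hs Hst).
  assert (exp (- (th * t)) <= exp (- (th * s))) by (apply exp_le_compat; nra).
  pose proof (exp_pos (- (th * t))).
  unfold g. rewrite !Rmult_assoc. apply Rmult_le_compat_l; [lra|].
  apply Rmult_le_compat; lra.
Qed.

Lemma discount_k_le_A s : 0 <= s -> s <= d -> k s <= A.
Proof.
  intros Hs Hsd. destruct admissible as (Ha & Hth & HS & HthS & HA & _).
  pose proof (F_bounds s Hs). pose proof c2_nonneg. pose proof (J_le_near_0 s ltac:(lra)).
  assert (0 <= c1) by (unfold c1; nra).
  assert (0 <= c1 * (s * F s)) by (apply Rmult_le_pos; nra).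
  assert (c2 * J s <= c2 * Rpower d p) by (apply Rmult_le_compat_l; lra).
  fold c2 d in HA. unfold k.
  apply Rle_trans with (a * (1 + c2 * Rpower d p)); [apply Rmult_le_compat_l|]; lra.
Qed.

Lemma discount_k_mass T : 0 <= T -> exists I, is_RInt k 0 T I /\ I <= 1.
Proof.
  intros HT. destruct admissible as (_ & _ & _ & _ & _ & Hmass).
  assert (Hk : is_improper_int0 k (a * (eta + (- c1) * sig + c2 * l))).
  { apply (is_improper_int0_ext (fun s => a * (F s + (- c1) * (s * F s) + c2 * J s)));
      [intros; unfold k; ring|].
    apply is_improper_int0_scal. apply is_improper_int0_lin; [|exact J_int].
    apply is_improper_int0_lin; assumption. }
  destruct (proj1 Hk T HT) as [I HI]. exists I. split; [exact HI|].
  apply Rle_trans with (a * (eta + (- c1) * sig + c2 * l)).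
  - apply (is_improper_int0_partial_le k _ T); auto. intros s Hs.
    pose proof (discount_g_nonneg s Hs). pose proof (discount_g_le_k s Hs). lra.
  - fold c2 in Hmass. unfold c1. lra.
Qed.

Theorem discounted_renewal_le t : 0 <= t -> exp (- (th * t)) * Rf t <= 4 * A.
Proof.
  destruct admissible as (Ha & Hth & _).
  pose proof discount_A_pos.
  apply (renewal_solution_le A d g k (fun t => exp (- (th * t)) * Rf t)
           (fun t s => a * exp (- (th * t)) * (Rf (t - s) * F s))); auto.
  - unfold d. field. lra.
  - exact discount_g_nonneg.
  - exact discount_g_le_k.
  - exact discount_g_le_A.
  - exact discount_g_nonincreasing.
  - exact discount_k_le_A.
  - exact discount_k_mass.
  - intros T HT. destruct (Rf_int T HT) as [I HI].
    destruct (is_RInt_bounded Rf 0 T I HT HI) as [M HM]. exists M. intros s Hs.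
    pose proof (HM s Hs). pose proof (Rle_abs (Rf s)). pose proof (Rabs_pos (Rf s)).
    pose proof (exp_pos (- (th * s))).
    assert (exp (- (th * s)) <= 1) by (rewrite <- exp_0; apply exp_le_compat; nra).
    nra.
  - intros s Hs. destruct (Rf_eq s Hs) as (I & HI & EI).
    exists (a * exp (- (th * s)) * I). split; [apply is_RInt_scal; auto|].
    rewrite EI. unfold g. ring.
  - intros s r Hr. unfold g.
    replace (exp (- (th * s))) with (exp (- (th * r)) * exp (- (th * (s - r))))
      by (rewrite <- exp_plus; f_equal; ring).
    ring.
Qed.

End DiscountedRenewal.

Lemma Un_cv_const c : Un_cv (fun _ => c) c.
Proof. intros e He. exists 0%nat. intros. unfold Rdist. rewrite Rminus_diag, Rabs_R0. auto. Qed.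

Lemma Un_cv_eq_lim u l l' : l = l' -> Un_cv u l -> Un_cv u l'.
Proof. now intros <-. Qed.

Lemma Un_cv_ext_eventually u v l N :
  (forall n, (N <= n)%nat -> u n = v n) -> Un_cv u l -> Un_cv v l.
Proof.
  intros Huv H e He. destruct (H e He) as [M HM]. exists (max N M). intros n Hn.
  rewrite <- Huv by lia. apply HM. lia.
Qed.

Lemma Un_cv_eventually_lt u l c : Un_cv u l -> l < c -> exists N, forall n, (N <= n)%nat -> u n < c.
Proof.
  intros H Hl. destruct (H (c - l) ltac:(lra)) as [N HN]. exists N. intros n Hn.
  specialize (HN n Hn). unfold Rdist in HN. apply Rabs_def2 in HN. lra.
Qed.

Lemma Un_cv_eventually_gt u l c : Un_cv u l -> c < l -> exists N, forall n, (N <= n)%nat -> c < u n.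
Proof.
  intros H Hl. destruct (H (l - c) ltac:(lra)) as [N HN]. exists N. intros n Hn.
  specialize (HN n Hn). unfold Rdist in HN. apply Rabs_def2 in HN. lra.
Qed.

Lemma cv_infty_sqrt u : cv_infty u -> cv_infty (fun n => sqrt (u n)).
Proof.
  intros H M. set (M' := Rmax M 0). pose proof (Rmax_l M 0). pose proof (Rmax_r M 0).
  destruct (H (M' * M')) as [N HN]. exists N. intros n Hn.
  specialize (HN n Hn).
  assert (sqrt (M' * M') < sqrt (u n)) by (apply sqrt_lt_1_alt; unfold M' in *; split; nra).
  rewrite sqrt_square in * by (unfold M'; lra). unfold M' in *; lra.
Qed.

Lemma Rpower_cv_0_of_cv_infty u q : cv_infty u -> q < 0 -> Un_cv (fun n => Rpower (u n) q) 0.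
Proof.
  intros H Hq e He. destruct (H (exp (ln e / q))) as [N HN]. exists N. intros n Hn.
  specialize (HN n Hn). unfold Rdist, Rpower.
  rewrite Rminus_0_r, Rabs_pos_eq by (left; apply exp_pos).
  assert (Hu : 0 < u n) by (pose proof (exp_pos (ln e / q)); lra).
  assert (Hl : ln e / q < ln (u n)).
  { rewrite <- (ln_exp (ln e / q)). apply ln_increasing; auto. apply exp_pos. }
  rewrite <- (exp_ln e) by lra. apply exp_increasing.
  apply Rmult_lt_reg_r with (- / q); [apply Ropp_0_gt_lt_contravar, Rinv_lt_0_compat; lra|].
  replace (q * ln (u n) * - / q) with (- ln (u n)) by (field; lra).
  replace (ln e * - / q) with (- (ln e / q)) by (field; lra). lra.
Qed.

Ltac cv_combine :=
  repeat first [ assumption | apply Un_cv_const | apply CV_minus | apply CV_plus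
               | apply CV_mult | apply CV_opp ].

Section Asymptotics.

Variables (lam mn eta sigma gam : nat -> R) (lam_l sigma_l b m beta : R).

Hypothesis gam_pos : forall n, (1 <= n)%nat -> 0 < gam n.
Hypothesis gam_infty : cv_infty gam.
Hypothesis lam_cv : Un_cv lam lam_l.
Hypothesis sigma_cv : Un_cv sigma sigma_l.
Hypothesis b_cv : Un_cv (fun n => gam n * (1 - lam n * eta n)) b.
Hypothesis m_cv : Un_cv (fun n => gam n * (1 - mn n)) m.

Lemma cv_1_of_scaled_deviation (x : nat -> R) c :
  Un_cv (fun n => gam n * (1 - x n)) c -> Un_cv x 1.
Proof.
  intros Hc. apply (Un_cv_ext_eventually (fun n => 1 - gam n * (1 - x n) * / gam n) _ _ 1).
  - intros n Hn. pose proof (gam_pos n Hn). field. lra.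
  - apply (Un_cv_eq_lim _ (1 - c * 0)); [ring|].
    pose proof (cv_infty_cv_0 gam gam_infty). cv_combine.
Qed.

Lemma mean_cv : Un_cv (fun n => lam n * mn n) lam_l.
Proof.
  apply (Un_cv_eq_lim _ (lam_l * 1)); [ring|].
  pose proof (cv_1_of_scaled_deviation mn m m_cv). cv_combine.
Qed.

Lemma drift_cv : Un_cv (fun n => gam n * (lam n * mn n * eta n - 1)) (- b - m).
Proof.
  apply (Un_cv_ext_eventually
           (fun n => - (gam n * (1 - lam n * eta n)) - lam n * eta n * (gam n * (1 - mn n))) _ _ 0).
  - intros n _. ring.
  - apply (Un_cv_eq_lim _ (- b - 1 * m)); [ring|].
    pose proof (cv_1_of_scaled_deviation _ b b_cv). cv_combine.
Qed.

Lemma discount_sqrt_cv : Un_cv (fun n => beta / gam n * sqrt (gam n)) 0.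
Proof.
  apply (Un_cv_ext_eventually (fun n => beta * / sqrt (gam n)) _ _ 1).
  - intros n Hn. pose proof (gam_pos n Hn) as Hg. pose proof (sqrt_lt_R0 _ Hg).
    assert (Hsq : gam n = sqrt (gam n) * sqrt (gam n)) by (rewrite sqrt_sqrt; lra).
    set (s := sqrt (gam n)) in *. rewrite Hsq. field. lra.
  - apply (Un_cv_eq_lim _ (beta * 0)); [ring|].
    pose proof (cv_infty_cv_0 _ (cv_infty_sqrt _ gam_infty)). cv_combine.
Qed.

Lemma discount_Rpower_cv p : 1 < p ->
  Un_cv (fun n => beta / gam n * Rpower (sqrt (gam n)) (1 - p)) 0.
Proof.
  intros Hp. apply (Un_cv_eq_lim _ (beta * 0 * 0)); [ring|].
  pose proof (cv_infty_cv_0 gam gam_infty).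
  pose proof (Rpower_cv_0_of_cv_infty _ (1 - p) (cv_infty_sqrt _ gam_infty) ltac:(lra)).
  cv_combine.
Qed.

(* The mass condition is [gam n] times a quantity tending to [- b - m - lam_l beta sigma_l],
   which is negative by the choice of [beta]. *)
Lemma eventually_admissible C0 l p : 0 < lam_l -> 0 < sigma_l -> 0 <= beta ->
  - (b + m) / (sigma_l * lam_l) < beta -> 1 < p ->
  exists N, (1 <= N)%nat /\ forall n, (N <= n)%nat ->
    discount_admissible (lam n * mn n) (beta / gam n) (sqrt (gam n)) C0 (eta n) (sigma n) l p
      (2 * lam_l).
Proof.
  intros Hlam Hsig Hbeta Hb Hp.
  pose proof mean_cv as Ha. pose proof drift_cv as Hdrift.
  pose proof discount_sqrt_cv as HthS. pose proof (discount_Rpower_cv p Hp) as HthK.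
  pose proof (Rpower_cv_0_of_cv_infty _ (1 - p) (cv_infty_sqrt _ gam_infty) ltac:(lra)) as HK.
  set (a := fun n => lam n * mn n) in *. set (th := fun n => beta / gam n) in *.
  set (sq := fun n => sqrt (gam n)) in *. set (K := fun n => Rpower (sq n) (1 - p)) in *.
  set (V := fun n => gam n * (a n * eta n - 1) - a n * beta * sigma n
                     + a n * beta * (th n * sq n) * sigma n + a n * beta * K n * C0 * l).
  assert (HV : Un_cv V (- b - m - lam_l * beta * sigma_l + lam_l * beta * 0 * sigma_l
                        + lam_l * beta * 0 * C0 * l)) by (unfold V; cv_combine).
  assert (HVneg : - b - m - lam_l * beta * sigma_l + lam_l * beta * 0 * sigma_l
                  + lam_l * beta * 0 * C0 * l < 0).
  { apply (Rmult_lt_compat_r (sigma_l * lam_l)) in Hb; [|nra].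
    unfold Rdiv in Hb. rewrite Rmult_assoc, Rinv_l in Hb by nra. nra. }
  assert (Hheight : Un_cv (fun n => a n * (1 + th n * K n * C0 * Rpower (/ (2 * (2 * lam_l))) p))
                      (lam_l * (1 + 0 * C0 * Rpower (/ (2 * (2 * lam_l))) p))) by cv_combine.
  destruct (Un_cv_eventually_lt _ _ _ HV HVneg) as [N1 HN1].
  destruct (Un_cv_eventually_lt _ _ (2 * lam_l) Hheight ltac:(lra)) as [N2 HN2].
  destruct (Un_cv_eventually_lt _ _ 1 HthS ltac:(lra)) as [N3 HN3].
  destruct (Un_cv_eventually_gt _ _ 0 Ha Hlam) as [N4 HN4].
  exists (S (N1 + N2 + N3 + N4)). split; [lia|]. intros n Hn.
  pose proof (gam_pos n ltac:(lia)) as Hg.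
  specialize (HN1 n ltac:(lia)). specialize (HN2 n ltac:(lia)).
  specialize (HN3 n ltac:(lia)). specialize (HN4 n ltac:(lia)).
  assert (Hmass : a n * (eta n - (th n - th n ^ 2 * sq n) * sigma n + th n * K n * C0 * l) <= 1).
  { assert (HVn : gam n * (a n * (eta n - (th n - th n ^ 2 * sq n) * sigma n
                                  + th n * K n * C0 * l) - 1) = V n)
      by (unfold V, th; field; lra).
    destruct (Rle_or_lt (a n * (eta n - (th n - th n ^ 2 * sq n) * sigma n
                                + th n * K n * C0 * l)) 1); [assumption|nra]. }
  repeat split.
  - exact HN4.
  - unfold th. apply Rmult_le_pos; [lra | left; apply Rinv_0_lt_compat; lra].
  - apply sqrt_lt_R0. lra.
  - left. exact HN3.
  - left. exact HN2.
  - exact Hmass.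
Qed.

End Asymptotics.

Theorem lemma5p2
  (lam : nat -> R) (Lbar : nat -> R -> R) (eta sigma : nat -> R)
  (p q : nat -> nat -> R) (mn : nat -> R) (gam : nat -> R)
  (gstar lam_l eta_l sigma_l b m : R) (psi phi : R -> R)
  (alpha beta : R) (Rn : nat -> R -> R) :
  (* standing assumptions, n >= 1 *)
  (forall n, (1 <= n)%nat -> 0 < lam n) ->
  (forall n, (1 <= n)%nat -> is_tail (Lbar n)) ->
  (forall n, (1 <= n)%nat -> is_improper_int0 (Lbar n) (eta n)) ->
  (forall n, (1 <= n)%nat -> is_improper_int0 (fun t => t * Lbar n t) (sigma n)) ->
  (forall n, (1 <= n)%nat -> prob_Zplus (p n) /\ prob_Zplus (q n)) ->
  (forall n, (1 <= n)%nat -> infinite_sum (fun k => INR k * p n k) (mn n)) ->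
  (forall n, (1 <= n)%nat -> 0 < gam n) ->
  cv_infty gam ->
  Un_cv (fun n => gam n / INR n) gstar -> 0 <= gstar ->
  (* Condition 1 *)
  Un_cv lam lam_l -> 0 < lam_l ->
  Un_cv eta eta_l -> 0 < eta_l ->
  Un_cv sigma sigma_l -> 0 < sigma_l ->
  Un_cv (fun n => gam n * (1 - lam n * eta n)) b ->
  unif_cv_compacts (fun n z => psi_n (q n) n (gam n) z) psi ->
  unif_lipschitz_bounded (fun n z => phi_n (p n) n (gam n) z) ->
  unif_cv_compacts (fun n z => phi_n (p n) n (gam n) z) phi ->
  continuous_on_Rplus phi ->
  (* m := lim gamma_n (1 - m^(n)) (exists under Condition 1) *)
  Un_cv (fun n => gam n * (1 - mn n)) m ->
  (* Condition 2 *)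
  1 < alpha -> alpha < 2 ->
  (exists C k0, 0 < C /\ 0 < k0 /\
     forall n M, (1 <= n)%nat ->
       INR n * gam n *
         sum_f_R0 (fun k => if Rle_dec k0 (INR k)
                            then Rpower (INR k / INR n) alpha * p n k else 0) M
       + sum_f_R0 (fun k => Rpower (INR k) alpha * q n k) M <= C) ->
  (forall eps, 0 < eps -> exists K1, forall k1, (K1 <= k1)%nat ->
     exists N, forall n M, (N <= n)%nat -> (1 <= n)%nat ->
       gam n * sum_f_R0 (fun k => if Nat.leb k1 k then INR k * p n k else 0) M
         <= eps) ->
  (exists C0 Lstar, 0 < C0 /\ is_tail Lstar /\
     (exists l, is_improper_int0
        (fun t => (if Rlt_dec 0 t then Rpower t (2 * alpha - 1) else 0)
                  * Lstar t) l) /\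
     forall n t, (1 <= n)%nat -> 0 <= t -> Lbar n t <= C0 * Lstar t) ->
  0 <= beta -> - (b + m) / (sigma_l * lam_l) < beta ->
  (* R^(n): the locally integrable solution of the renewal equation *)
  (forall n, (1 <= n)%nat ->
     (forall T, 0 <= T -> exists I, is_RInt (Rn n) 0 T I) /\
     forall t, 0 <= t -> exists I,
       is_RInt (fun s => Rn n (t - s) * Lbar n s) 0 t I /\
       Rn n t = lam n * mn n * Lbar n t + lam n * mn n * I) ->
  exists (n0 : nat) (C : R), (1 <= n0)%nat /\ 0 < C /\
    forall n, (n0 < n)%nat -> forall t, 0 <= t ->
      exp (- beta * t / gam n) * Rn n t <= C.
Proof.
  intros Hlam Htail Heta Hsig Hpq Hmn Hgam Hinf Hgs Hgs0 Clam Hlaml Ceta Hetal Csig Hsigl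
    Cb Hpsi Hlip Hphi Hphic Cm Ha1 Ha2 Hc2a Hc2b HLs Hb0 Hb HR.
  destruct HLs as (C0 & Ls & HC0 & HLs & (l & Hl) & Hdom).
  destruct (eventually_admissible lam mn eta sigma gam lam_l sigma_l b m beta
              Hgam Hinf Clam Csig Cb Cm C0 l (2 * alpha - 1) Hlaml Hsigl Hb0 Hb ltac:(lra))
    as (N & HN1 & HN).
  exists N, (4 * (2 * lam_l)). split; [exact HN1|]. split; [lra|].
  intros n Hn t Ht.
  assert (Hn1 : (1 <= n)%nat) by lia.
  destruct (HR n Hn1) as [HRi HReq].
  replace (- beta * t / gam n) with (- (beta / gam n * t)) by (pose proof (Hgam n Hn1); field; lra).
  apply (discounted_renewal_le (Lbar n) Ls (Rn n) (lam n * mn n) (beta / gam n) (sqrt (gam n))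
           C0 (eta n) (sigma n) l (2 * alpha - 1)); auto; [apply HN; lia | lra].
Qed.
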